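(* Let $g\in\mathbb{R}^n$, $\Delta>0$, and $B\in\mathbb{R}^{n\times n}$ (not necessarily symmetric) be positive semidefinite in the sense $h^TBh\ge0$ for all $h\in\mathbb{R}^n$, and let $m(s)=c+\langle g,s\rangle+\frac12\langle s,Bs\rangle$ for a constant $c$. Suppose $t\ge0$ and constants $\lambda_1,\lambda_2>0$ satisfy $\frac12h^TBh+t\|h\|^2\ge\lambda_1\|h\|^2$ for all $h\in\mathbb{R}^n$ and $\|B+tI\|\le\lambda_2$. Let $p\in\mathbb{R}^n$ satisfy $(B+tI)p=-g+r$ with $\|r\|\le\frac{\lambda_1}{2(\lambda_1+\lambda_2)}\|g\|$, and set $s=\min\{\Delta,\|p\|\}\,p/\|p\|$. Then $$m(0)-m(s)\ge\frac{\gamma_1}{2}\|g\|\min\{\Delta,\gamma_2\|g\|\}\quad\text{with }\gamma_1=\frac{\lambda_1}{2\lambda_2},\ \gamma_2=\frac{\lambda_1+2\lambda_2}{2\lambda_2(\lambda_1+\lambda_2)}.$$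
   Context: $\|\cdot\|$ denotes the Euclidean norm on vectors; the matrix norm bound $\|B+tI\|\le\lambda_2$ is used as a bound on the operator norm $\max_{h\ne0}\|(B+tI)h\|/\|h\|$ (the Frobenius norm bounds it from above). *)

From HB Require Import structures.
From mathcomp Require Import all_boot all_order all_algebra.
Set Implicit Arguments. Unset Strict Implicit. Unset Printing Implicit Defensive.
Import Order.TTheory GRing.Theory Num.Theory.
Local Open Scope ring_scope.

Definition dotv (R : rcfType) (n : nat) (u v : 'cV[R]_n) : R :=
  \sum_(i < n) u i 0 * v i 0.

Definition enorm (R : rcfType) (n : nat) (u : 'cV[R]_n) : R :=
  Num.sqrt (dotv u u).

Definition opnorm_le (R : rcfType) (n : nat) (A : 'M[R]_n) (c : R) : Prop :=
  forall h : 'cV[R]_n, enorm (A *m h) <= c * enorm h.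

Definition qmodel (R : rcfType) (n : nat) (c : R) (g : 'cV[R]_n) (B : 'M[R]_n)
  (s : 'cV[R]_n) : R :=
  c + dotv g s + 2^-1 * dotv s (B *m s).

(** Pairing the system with p and using the
    coercivity bound gives -<g,p> - <p,Bp>/2 >= lambda1 |p|^2 - |r| |p|, and
    since <p,Bp> >= 0 the model decrease along the segment [0, p] is at least
    the fraction min(Delta,|p|)/|p| of that quantity.  The operator-norm bound
    turns the system into |g| <= lambda2 |p| + |r|, so the small residual
    forces |p| >= gamma2 |g| and lambda1 |p| - |r| >= gamma1 |g|. *)
From HB Require Import structures.
From mathcomp Require Import all_boot all_order all_algebra.
From mathcomp Require Import ring lra.
Import Order.TTheory GRing.Theory Num.Theory.
Set Implicit Arguments. Unset Strict Implicit.
Local Open Scope ring_scope.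

Section EuclideanGeometry.
Variables (R : rcfType) (n : nat).
Implicit Types u v w : 'cV[R]_n.

Lemma dotvC u v : dotv u v = dotv v u.
Proof. by apply: eq_bigr => i _; rewrite mulrC. Qed.

Lemma dotvDl u v w : dotv (u + v) w = dotv u w + dotv v w.
Proof. by rewrite /dotv -big_split; apply: eq_bigr => i _; rewrite !mxE mulrDl. Qed.

Lemma dotvZl a u v : dotv (a *: u) v = a * dotv u v.
Proof. by rewrite /dotv mulr_sumr; apply: eq_bigr => i _; rewrite !mxE mulrA. Qed.

Lemma dotvNl u v : dotv (- u) v = - dotv u v.
Proof. by rewrite -scaleN1r dotvZl mulN1r. Qed.

Lemma dotvDr u v w : dotv u (v + w) = dotv u v + dotv u w.
Proof. by rewrite !(dotvC u) dotvDl. Qed.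

Lemma dotvZr a u v : dotv u (a *: v) = a * dotv u v.
Proof. by rewrite !(dotvC u) dotvZl. Qed.

Lemma dotvNr u v : dotv u (- v) = - dotv u v.
Proof. by rewrite !(dotvC u) dotvNl. Qed.

Lemma dotv0l v : dotv 0 v = 0.
Proof. by rewrite -(scale0r 0) dotvZl mul0r. Qed.

Lemma dotv0r v : dotv v 0 = 0.
Proof. by rewrite dotvC dotv0l. Qed.

Lemma dotvv_ge0 u : 0 <= dotv u u.
Proof. by apply: sumr_ge0 => i _; rewrite -expr2 sqr_ge0. Qed.

Lemma dotvv_eq0 u : dotv u u = 0 -> u = 0.
Proof.
move=> /eqP; rewrite psumr_eq0 => [/allP u0|i _]; last by rewrite -expr2 sqr_ge0.
apply/matrixP => i j; rewrite ord1 mxE.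
by have /implyP/(_ isT) := u0 i (mem_index_enum i); rewrite mulf_eq0 orbb => /eqP.
Qed.

Lemma enorm_ge0 u : 0 <= enorm u.
Proof. exact: sqrtr_ge0. Qed.

Lemma enorm_sqr u : enorm u ^+ 2 = dotv u u.
Proof. by rewrite sqr_sqrtr ?dotvv_ge0. Qed.

Lemma enormN u : enorm (- u) = enorm u.
Proof. by rewrite /enorm dotvNl dotvNr opprK. Qed.

Lemma dotv_sqr_le u v : dotv u v ^+ 2 <= dotv u u * dotv v v.
Proof.
have [v0|v_neq0] := eqVneq (dotv v v) 0.
  by rewrite v0 (dotvv_eq0 v0) dotv0r expr0n mulr0.
have v_gt0 : 0 < dotv v v by rewrite lt0r v_neq0 dotvv_ge0.
(* expand 0 <= |u - x v|^2 at the minimising x = <u,v>/<v,v> *)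
set x := dotv u v / dotv v v.
have := dotvv_ge0 (u - x *: v).
rewrite dotvDl !dotvDr !dotvNl !dotvNr !dotvZl !dotvZr (dotvC v u).
have -> : x * (x * dotv v v) = x * dotv u v by rewrite /x mulfVK.
rewrite -(pmulr_rge0 _ v_gt0) => uv_ge0.
rewrite -subr_ge0; apply: le_trans uv_ge0 _.
by rewrite le_eqVlt; apply/orP; left; apply/eqP; rewrite /x; field; rewrite v_neq0.
Qed.

Lemma dotv_le_enorm u v : dotv u v <= enorm u * enorm v.
Proof.
have := dotv_sqr_le u v; rewrite -!enorm_sqr -exprMn.
have := mulr_ge0 (enorm_ge0 u) (enorm_ge0 v).
move: (enorm u * enorm v) (dotv u v) => a d; nra.
Qed.

Lemma enormD_le u v : enorm (u + v) <= enorm u + enorm v.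
Proof.
have := enorm_ge0 (u + v); have := enorm_ge0 u; have := enorm_ge0 v.
have : enorm (u + v) ^+ 2 <= (enorm u + enorm v) ^+ 2.
  rewrite enorm_sqr dotvDl !dotvDr (dotvC v u) sqrrD !enorm_sqr.
  by have := dotv_le_enorm u v; lra.
move: (enorm (u + v)) (enorm u) (enorm v) => a b c; nra.
Qed.

End EuclideanGeometry.

Lemma min_divKr (R : realFieldType) (Delta a : R) :
  0 <= Delta -> 0 <= a -> Num.min Delta a / a * a = Num.min Delta a.
Proof.
move=> Delta_ge0; rewrite le_eqVlt => /orP[/eqP <-|a_gt0].
  by rewrite mulr0 (min_idPr Delta_ge0).
by rewrite divfK ?gt_eqF.
Qed.

Lemma min_div_ge0_le1 (R : realFieldType) (Delta a : R) :
  0 <= Delta -> 0 <= a -> 0 <= Num.min Delta a / a <= 1.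
Proof.
move=> Delta_ge0 a_ge0; have min_ge0 : 0 <= Num.min Delta a by rewrite le_min Delta_ge0.
rewrite divr_ge0 //=; have [->|a_neq0] := eqVneq a 0; first by rewrite invr0 mulr0.
by rewrite ler_pdivrMr ?lt0r ?a_neq0 // mul1r ge_min lexx orbT.
Qed.

Section InexactNewtonStep.
Variables (R : rcfType) (n : nat) (B : 'M[R]_n) (t : R) (g p r : 'cV[R]_n).
Hypothesis newton_system : (B + t%:M) *m p = - g + r.

Lemma qmodel_decrease_segment c a :
  0 <= a <= 1 -> 0 <= dotv p (B *m p) ->
  a * (- dotv g p - 2^-1 * dotv p (B *m p)) <= qmodel c g B 0 - qmodel c g B (a *: p).
Proof.
move=> /andP[a_ge0 a_le1] Bp_ge0.
rewrite /qmodel dotv0r dotv0l -scalemxAr dotvZr dotvZl dotvZr.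
have : a * (a * dotv p (B *m p)) <= a * dotv p (B *m p).
  by apply: ler_wpM2l => //; rewrite ler_piMl.
lra.
Qed.

Lemma newton_gradient_dotv :
  dotv g p = dotv r p - dotv p (B *m p) - t * enorm p ^+ 2.
Proof.
have := congr1 (dotv p) newton_system.
rewrite mulmxDl mul_scalar_mx dotvDr dotvZr dotvDr dotvNr !(dotvC p) enorm_sqr.
lra.
Qed.

Lemma newton_decrease_ge lambda1 :
  lambda1 * enorm p ^+ 2 <= 2^-1 * dotv p (B *m p) + t * enorm p ^+ 2 ->
  lambda1 * enorm p ^+ 2 - enorm r * enorm p <= - dotv g p - 2^-1 * dotv p (B *m p).
Proof.
rewrite newton_gradient_dotv.
have := dotv_le_enorm r p; lra.
Qed.

Lemma newton_gradient_enorm_le lambda2 :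
  opnorm_le (B + t%:M) lambda2 -> enorm g <= lambda2 * enorm p + enorm r.
Proof.
move=> opB; have -> : g = r - (B + t%:M) *m p.
  by rewrite newton_system opprD opprK addrCA subrr addr0.
by apply: le_trans (enormD_le _ _) _; rewrite enormN addrC lerD2r.
Qed.

Lemma qmodel_decrease_trust_step c Delta lambda1 :
  0 <= Delta -> 0 <= dotv p (B *m p) ->
  lambda1 * enorm p ^+ 2 <= 2^-1 * dotv p (B *m p) + t * enorm p ^+ 2 ->
  Num.min Delta (enorm p) * (lambda1 * enorm p - enorm r)
    <= qmodel c g B 0 - qmodel c g B ((Num.min Delta (enorm p) / enorm p) *: p).
Proof.
move=> Delta_ge0 Bp_ge0 coercive_p; have p_ge0 := enorm_ge0 p.
have step_ge0 : 0 <= Num.min Delta (enorm p) by rewrite le_min Delta_ge0.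
apply: le_trans (qmodel_decrease_segment c (min_div_ge0_le1 Delta_ge0 p_ge0) Bp_ge0).
apply: le_trans (ler_wpM2l (divr_ge0 step_ge0 p_ge0) (newton_decrease_ge coercive_p)).
by rewrite -{1}(min_divKr Delta_ge0 p_ge0); lra.
Qed.

End InexactNewtonStep.

Section StepConstants.
Variables (R : realFieldType) (lambda1 lambda2 G a rho : R).

Lemma gamma2_le_step : 0 < lambda1 -> 0 < lambda2 ->
  G <= lambda2 * a + rho -> rho <= lambda1 / (2 * (lambda1 + lambda2)) * G ->
  (lambda1 + 2 * lambda2) / (2 * lambda2 * (lambda1 + lambda2)) * G <= a.
Proof.
move=> lambda1_gt0 lambda2_gt0 G_le; set kappa := _ / _ => rho_le.
have -> : (lambda1 + 2 * lambda2) / (2 * lambda2 * (lambda1 + lambda2))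
          = (1 - kappa) / lambda2.
  by rewrite /kappa; field; apply/andP; split; lra.
by rewrite mulrAC ler_pdivrMr //; lra.
Qed.

Lemma gamma1_le_margin : 0 < lambda1 -> 0 < lambda2 ->
  G <= lambda2 * a + rho -> rho <= lambda1 / (2 * (lambda1 + lambda2)) * G ->
  lambda1 / (2 * lambda2) * G <= lambda1 * a - rho.
Proof.
move=> lambda1_gt0 lambda2_gt0 G_le rho_le.
have := ler_wpM2l (ltW lambda1_gt0) (gamma2_le_step lambda1_gt0 lambda2_gt0 G_le rho_le).
move: rho_le; set kappa := _ / (2 * (_ + _)); set gamma2 := _ / (2 * _ * _).
have -> : lambda1 / (2 * lambda2) = lambda1 * gamma2 - kappa.
  by rewrite /gamma2 /kappa; field; apply/andP; split; lra.
lra.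
Qed.

End StepConstants.

Unset Implicit Arguments.

Theorem lemmaB1 (R : rcfType) (n : nat) (g : 'cV[R]_n) (Delta : R)
  (B : 'M[R]_n) (c t lambda1 lambda2 : R) (p r : 'cV[R]_n) :
  0 < Delta ->
  (forall h : 'cV[R]_n, 0 <= dotv h (B *m h)) ->
  0 <= t -> 0 < lambda1 -> 0 < lambda2 ->
  (forall h : 'cV[R]_n,
      2^-1 * dotv h (B *m h) + t * enorm h ^+ 2 >= lambda1 * enorm h ^+ 2) ->
  opnorm_le (B + t%:M) lambda2 ->
  (B + t%:M) *m p = - g + r ->
  enorm r <= lambda1 / (2 * (lambda1 + lambda2)) * enorm g ->
  let s := (Num.min Delta (enorm p) / enorm p) *: p in
  let gamma1 := lambda1 / (2 * lambda2) in
  let gamma2 := (lambda1 + 2 * lambda2) / (2 * lambda2 * (lambda1 + lambda2)) in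
  qmodel c g B 0 - qmodel c g B s
    >= gamma1 / 2 * enorm g * Num.min Delta (gamma2 * enorm g).
Proof.
move=> Delta_gt0 B_psd _ lambda1_gt0 lambda2_gt0 coercive opB system r_small /=.
set gamma1 := lambda1 / (2 * lambda2).
set gamma2 := (lambda1 + 2 * lambda2) / _.
have g_le := newton_gradient_enorm_le system opB.
have gamma1_le : gamma1 * enorm g <= lambda1 * enorm p - enorm r.
  exact: gamma1_le_margin lambda1_gt0 lambda2_gt0 g_le r_small.
have gamma2_le : gamma2 * enorm g <= enorm p.
  exact: gamma2_le_step lambda1_gt0 lambda2_gt0 g_le r_small.
have gamma1_g_ge0 : 0 <= gamma1 * enorm g.
  by rewrite mulr_ge0 ?enorm_ge0 // divr_ge0 ?mulr_ge0 //; lra.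
have gamma2_g_ge0 : 0 <= gamma2 * enorm g.
  by rewrite mulr_ge0 ?enorm_ge0 // divr_ge0 ?mulr_ge0 //; lra.
have min_le : Num.min Delta (gamma2 * enorm g) <= Num.min Delta (enorm p).
  by rewrite le_min !ge_min lexx gamma2_le orbT.
have min_ge0 : 0 <= Num.min Delta (gamma2 * enorm g) by rewrite le_min ltW.
apply: le_trans (qmodel_decrease_trust_step system c (ltW Delta_gt0) (B_psd p) (coercive p)).
have := ler_pM min_ge0 gamma1_g_ge0 min_le gamma1_le.
have := mulr_ge0 gamma1_g_ge0 min_ge0.
lra.
Qed.
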